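(* Let $G=(V,E)$ be a tree with boundary with degree sequence $\pi$. Let $(v_1,u_1),(v_2,u_2)\in E$ be edges such that $u_2$ lies on the geodesic path from $v_1$ to $v_2$ but $u_1$ does not. Let $G'=(V,E')$ be obtained by replacing the edges $(v_1,u_1)$ and $(v_2,u_2)$ by the edges $(v_1,v_2)$ and $(u_1,u_2)$. Then $G'$ is a tree with boundary with degree sequence $\pi$ and the same set of boundary vertices as $G$. Moreover, for every function $f:V\to\mathbb{R}$ with $f|_{\partial V}=0$ and $f\not\equiv 0$ satisfying $f(v_1)\ge f(u_2)$ and $f(v_2)\ge f(u_1)$, we have $\mathcal{R}_{G'}(f)\le\mathcal{R}_G(f)$, with strict inequality if both $f(v_1)>f(u_2)$ and $f(v_2)>f(u_1)$.
   Context: A tree with boundary is a finite tree $G=(V,E)$ whose vertex set is partitioned into the set $\partial V$ of boundary vertices, which are exactly the vertices of degree $1$, and the set $V_0$ of interior vertices, which are exactly the vertices of degree at least $2$; both sets are nonempty. Its degree sequence is the multiset of vertex degrees. For a graph $H$ on vertex set $V$ with edge set $E_H$, the Rayleigh quotient of $f:V\to\mathbb{R}$, $f\not\equiv0$, is $\mathcal{R}_H(f)=\sum_{(u,v)\in E_H}(f(u)-f(v))^2\big/\sum_{v\in V}f(v)^2$. *)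

From HB Require Import structures.
From mathcomp Require Import all_boot all_order all_algebra.
Set Implicit Arguments. Unset Strict Implicit. Unset Printing Implicit Defensive.
Import Order.TTheory GRing.Theory Num.Theory.

Definition simple_graph (V : finType) (e : rel V) : Prop :=
  symmetric e /\ irreflexive e.

Definition deg (V : finType) (e : rel V) (x : V) : nat := #|[pred y | e x y]|.

Definition connected_graph (V : finType) (e : rel V) : Prop :=
  forall x y : V, connect e x y.

Definition acyclic_graph (V : finType) (e : rel V) : Prop :=
  forall p : seq V, 3 <= size p -> uniq p -> ~~ cycle e p.

Definition is_tree (V : finType) (e : rel V) : Prop :=
  [/\ simple_graph e, connected_graph e & acyclic_graph e].

Definition tree_with_boundary (V : finType) (e : rel V) : Prop :=
  [/\ is_tree e, (forall x, 1 <= deg e x),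
      (exists x, deg e x == 1) & (exists x, 2 <= deg e x)].

Definition boundary (V : finType) (e : rel V) : {set V} :=
  [set x | deg e x == 1].

(* degree sequence as a multiset: the list of degrees up to permutation *)
Definition degree_seq (V : finType) (e : rel V) : seq nat :=
  [seq deg e x | x <- enum V].

(* a geodesic (shortest path) from a to b, given as its list of vertices
   after a *)
Definition geodesic (V : finType) (e : rel V) (a b : V) (p : seq V) : Prop :=
  [/\ path e a p, last a p = b &
      forall q : seq V, path e a q -> last a q = b -> size p <= size q].

Definition on_geodesic (V : finType) (e : rel V) (a b u : V) : Prop :=
  exists p, geodesic e a b p /\ u \in a :: p.

Definition same_pair (V : eqType) (x y a b : V) : bool :=
  ((x == a) && (y == b)) || ((x == b) && (y == a)).

Definition switch (V : finType) (e : rel V) (v1 u1 v2 u2 : V) : rel V :=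
  fun x y =>
    (e x y && ~~ same_pair x y v1 u1 && ~~ same_pair x y v2 u2)
    || same_pair x y v1 v2 || same_pair x y u1 u2.

Local Open Scope ring_scope.

(* Rayleigh quotient: sum over (unordered) edges of (f u - f v)^2 divided by
   sum of f^2; each unordered edge appears twice among ordered pairs, hence
   the factor 1/2. *)
Definition rayleigh (R : realFieldType) (V : finType) (e : rel V) (f : V -> R) : R :=
  ((\sum_(x : V) \sum_(y : V | e x y) (f x - f y) ^+ 2) / 2)
  / (\sum_(x : V) f x ^+ 2).

From mathcomp Require Import all_boot all_order all_algebra ring.
From Stdlib Require Import FunctionalExtensionality.
Import Order.TTheory GRing.Theory Num.Theory.
Set Implicit Arguments. Unset Strict Implicit. Unset Printing Implicit Defensive.

(** Cutting the branch hanging at b off its neighbour a and regrafting it at a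
   vertex c on a's side of the edge {a, b} keeps a tree a tree: it stays
   connected, and every edge stays a bridge, witnessed by its old cut, with the
   moved branch switched to the other side when the cut separates c from b.
   The switch of the theorem is two such moves: the branch at u1 moves from v1
   to u2 (which is on v1's side, since the geodesic from v1 to u2 avoids u1),
   then the branch at v2 moves from u2 to v1.  Each move trades an edge at a for
   an edge at c, so the two moves together preserve all degrees, and the
   Dirichlet energy drops by
   2((f v1 - f u1)^2 + (f u2 - f v2)^2 - (f u2 - f u1)^2 - (f v1 - f v2)^2)
   = 4 (f v1 - f u2) (f v2 - f u1). *)

Section SamePair.
Variable T : eqType.
Implicit Types x y a b : T.

Lemma same_pairC x y a b : same_pair y x a b = same_pair x y a b.
Proof. by rewrite /same_pair orbC !(andbC (y == _)). Qed.

Lemma same_pairCr x y a b : same_pair x y b a = same_pair x y a b.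
Proof. by rewrite /same_pair orbC. Qed.

Lemma same_pair_sym x y a b : same_pair a b x y = same_pair x y a b.
Proof. by rewrite /same_pair !(eq_sym a) !(eq_sym b) [(y == a) && _]andbC. Qed.

Lemma same_pair_refl x y : same_pair x y x y.
Proof. by rewrite /same_pair !eqxx. Qed.

Lemma same_pair_notr x y a b : x != b -> y != b -> same_pair x y a b = false.
Proof. by move=> /negbTE xb /negbTE yb; rewrite /same_pair xb yb !andbF. Qed.

End SamePair.

Lemma last_take_index (T : eqType) (a c : T) p :
  c \in a :: p -> last a (take (index c (a :: p)) p) = c.
Proof.
move=> cp; have le_i : index c (a :: p) <= size p by rewrite -ltnS index_mem.
by rewrite (last_nth a) size_takel // -[a :: _]/(take _.+1 (a :: p)) nth_take // nth_index.
Qed.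

Section Graphs.
Variable V : finType.
Implicit Types (g h : rel V) (T : pred V) (a b c x y z w : V).

Definition del_edge g a b : rel V := fun x y => g x y && ~~ same_pair x y a b.

Definition all_bridges g := forall x y, g x y -> ~~ connect (del_edge g x y) x y.

Lemma del_edge_sym g a b : symmetric g -> symmetric (del_edge g a b).
Proof. by move=> sym_g x y; rewrite /del_edge sym_g same_pairC. Qed.

Lemma connect_del_edge_eq g a b x z w : symmetric g -> g z w -> ~~ same_pair z w a b ->
  connect (del_edge g a b) x z = connect (del_edge g a b) x w.
Proof.
move=> sym_g gzw nzw.
apply: (connect_closed (sym_connect_sym (del_edge_sym a b sym_g))).
by rewrite /del_edge gzw.
Qed.

Lemma path_del_edge g a b x p : b \notin x :: p -> path g x p -> path (del_edge g a b) x p.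
Proof.
elim: p x => //= y p IH x; rewrite in_cons negb_or => /andP[bx byp] /andP[gxy gp].
have by' : b != y by apply: contraNneq byp => ->; rewrite mem_head.
by rewrite /del_edge gxy same_pair_notr 1?eq_sym //= IH.
Qed.

Lemma cut_not_connect h T x y :
  (forall z w, h z w -> T z = T w) -> T x != T y -> ~~ connect h x y.
Proof.
move=> hT; apply: contra => /connectP [p hp ->] {y}.
by elim: p x hp => [|z p IH] x //= /andP[/hT -> /IH].
Qed.

Lemma acyclic_all_bridges g : simple_graph g -> acyclic_graph g -> all_bridges g.
Proof.
move=> [sym_g irr_g] acyc a b gab; apply/negP => /connectP [p pp lp].
case: (shortenP pp) lp => p' pp' up' _ lp.
have gp' : path g a p' by apply: sub_path pp' => x y /andP[].
case: p' pp' up' lp gp' => [|c [|d q]] /=.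
- by move=> _ _ lp; rewrite lp irr_g in gab.
- by move=> /andP[/andP[_]] + _ _ lp; rewrite lp same_pair_refl.
- move=> _ up lp gp; have := acyc [:: a, c, d & q] isT up.
  by rewrite /cycle rcons_path /= -lp gp sym_g gab.
Qed.

Lemma all_bridges_acyclic g : symmetric g -> all_bridges g -> acyclic_graph g.
Proof.
move=> sym_g br [|x [|y [|z r]]] // _ uniq_p; apply/negP => -[/andP[gxy cyc]].
have {cyc} : path g y (rcons (z :: r) x) := cyc.
rewrite rcons_path => /andP[pr glast].
move: uniq_p; rewrite cons_uniq in_cons negb_or => /andP[/andP[xy xr] /andP[yr _]].
have lr : last z r \in z :: r := mem_last z r.
have /negP := br y x (etrans (sym_g y x) gxy); apply; apply/connectP.
exists (rcons (z :: r) x); last by rewrite last_rcons.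
rewrite rcons_path; apply/andP; split.
  apply: (sub_in_path (P := predC1 x)) pr; last first.
    apply/allP => w; rewrite in_cons => /orP[/eqP -> | wr] /=; first by rewrite eq_sym.
    by apply: contraNneq xr => <-.
  by move=> a b ax bx gab; rewrite !inE in ax bx; rewrite /del_edge gab same_pair_notr.
have ly : last z r != y by apply: contraTneq lr => ->.
have lx : last z r != x by apply: contraTneq lr => ->.
by rewrite /del_edge glast /same_pair (negbTE ly) (negbTE lx).
Qed.

Lemma sum_same_pair (M : nmodType) (w : V -> M) x a b : a != b ->
  (\sum_(y | same_pair x y a b) w y = w b *+ (x == a) + w a *+ (x == b))%R.
Proof.
move=> /negbTE ab; rewrite /same_pair.
case: (eqVneq x a) => [->|_].
  by rewrite (eq_bigl (pred1 b)) ?big_pred1_eq ?ab ?addr0 // => y; rewrite ?ab ?orbF.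
case: (eqVneq x b) => [_|_].
  by rewrite (eq_bigl (pred1 a)) ?big_pred1_eq ?add0r.
by rewrite big_pred0 ?addr0.
Qed.

Lemma sum_mulrn_eq (M : nmodType) (F : V -> M) a : (\sum_x F x *+ (x == a))%R = F a.
Proof. by rewrite (bigD1 a) //= eqxx mulr1n big1 ?addr0 // => x /negbTE ->. Qed.

Definition reattach g a b c : rel V := fun x y => del_edge g a b x y || same_pair x y c b.

Definition dirichlet (R : pzRingType) g (f : V -> R) : R :=
  (\sum_x \sum_(y | g x y) (f x - f y) ^+ 2)%R.

Section Reattach.
Variables (g : rel V) (a b c : V).
Hypotheses (tree_g : is_tree g) (gab : g a b) (side_c : connect (del_edge g a b) a c).

Let sym_g : symmetric g. Proof. by case: tree_g => -[]. Qed.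
Let irr_g : irreflexive g. Proof. by case: tree_g => -[]. Qed.
Let bridges_g : all_bridges g.
Proof. by case: tree_g => simple_g _; apply: acyclic_all_bridges. Qed.

Let neq_ab : a != b. Proof. by apply: contraTneq gab => ->; rewrite irr_g. Qed.
Let sym_del : symmetric (del_edge g a b) := del_edge_sym a b sym_g.

Lemma reattach_neq : c != b.
Proof. by apply: contraTneq side_c => ->; apply: bridges_g. Qed.

Lemma reattach_edge_eq : g c b -> c = a.
Proof.
move=> gcb; apply/eqP; apply: contraNT (bridges_g gab) => ca.
apply: connect_trans side_c (connect1 _).
by rewrite /del_edge gcb /same_pair (negbTE ca) (negbTE reattach_neq).
Qed.

Lemma reattach_sym : symmetric (reattach g a b c).
Proof. by move=> x y; rewrite /reattach sym_del same_pairC. Qed.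

Lemma reattach_irr : irreflexive (reattach g a b c).
Proof.
move=> x; rewrite /reattach /del_edge irr_g /same_pair.
by case: (eqVneq x c) => [->|/negbTE xc]; rewrite ?(negbTE reattach_neq) ?xc !andbF.
Qed.

Lemma reattach_connected : connected_graph (reattach g a b c).
Proof.
have del_sub z w : del_edge g a b z w -> connect (reattach g a b c) z w.
  by move=> dzw; apply: connect1; rewrite /reattach dzw.
have conn_ab : connect (reattach g a b c) a b.
  apply: connect_trans (connect_sub del_sub side_c) (connect1 _).
  by rewrite /reattach same_pair_refl orbT.
have [_ conn_g _] := tree_g.
move=> x y; apply: connect_sub (conn_g x y) => z w gzw.
have [|nzw] := boolP (same_pair z w a b).
  by case/orP=> /andP[/eqP-> /eqP->]; rewrite // (sym_connect_sym reattach_sym).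
by apply: connect1; rewrite /reattach /del_edge gzw nzw.
Qed.

Let reattach_closed x y (T : pred V) :
  (forall z w, g z w -> ~~ same_pair z w a b -> ~~ same_pair z w x y -> T z = T w) ->
  (~~ same_pair c b x y -> T c = T b) ->
  forall z w, del_edge (reattach g a b c) x y z w -> T z = T w.
Proof.
move=> Tg Tcb z w /andP[/orP[/andP[gzw nab] | czw] nxy]; first exact: Tg.
case/orP: czw nxy => /andP[/eqP-> /eqP->] nxy; first exact: Tcb.
by rewrite Tcb // -same_pairC.
Qed.

Lemma reattach_all_bridges : all_bridges (reattach g a b c).
Proof.
pose S := connect (del_edge g a b) b.
have S_closed z w : g z w -> ~~ same_pair z w a b -> S z = S w.
  exact: connect_del_edge_eq.
have Sb : S b := connect0 _ _.
have Sa : S a = false by rewrite /S (sym_connect_sym sym_del); apply/negbTE/bridges_g.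
have Sc : S c = false.
  apply/negbTE; apply: contraFN Sa => Sc.
  by apply: connect_trans Sc _; rewrite (sym_connect_sym sym_del).
move=> x y /orP[/andP[gxy nab] | cxy].
- pose T0 := connect (del_edge g x y) x.
  have T0_closed z w : g z w -> ~~ same_pair z w x y -> T0 z = T0 w.
    exact: connect_del_edge_eq.
  have T0x : T0 x := connect0 _ _.
  have T0y : T0 y = false by apply/negbTE/bridges_g.
  (* If the cut of {x, y} separates c from b, the moved branch changes side. *)
  pose T z := if T0 c == T0 b then T0 z else T0 z (+) S z.
  apply: (cut_not_connect (T := T)).
    apply: reattach_closed => [z w gzw nab' nxy|_].
      by rewrite /T (T0_closed z w gzw nxy) (S_closed z w gzw nab').
    by rewrite /T Sb Sc; case: eqP => //; case: (T0 c); case: (T0 b).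
  by rewrite /T (S_closed x y gxy nab) T0x T0y; case: ifP; case: (S y).
- apply: (cut_not_connect (T := S)).
    apply: reattach_closed => [z w gzw nab' _|]; first exact: S_closed.
    by rewrite same_pair_sym cxy.
  by case/orP: cxy => /andP[/eqP-> /eqP->]; rewrite Sb Sc.
Qed.

Lemma is_tree_reattach : is_tree (reattach g a b c).
Proof.
split; first by split; [exact: reattach_sym | exact: reattach_irr].
  exact: reattach_connected.
exact: all_bridges_acyclic reattach_sym reattach_all_bridges.
Qed.

Lemma reattach_count x y :
  (reattach g a b c x y + same_pair x y a b = g x y + same_pair x y c b)%N.
Proof.
have ab_g : same_pair x y a b ==> g x y.
  by apply/implyP => /orP[]/andP[/eqP-> /eqP->]; rewrite // sym_g.
have cb_ab : same_pair x y c b && g x y ==> same_pair x y a b.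
  apply/implyP => /andP[/orP[]/andP[/eqP-> /eqP->]]; last rewrite sym_g.
    by move/reattach_edge_eq->; rewrite same_pair_refl.
  by move/reattach_edge_eq->; rewrite same_pairC same_pair_refl.
rewrite /reattach /del_edge; move: ab_g cb_ab.
by case: (g x y); case: (same_pair x y a b); case: (same_pair x y c b).
Qed.

Lemma sum_reattach (M : nmodType) (w : V -> M) x :
  (\sum_(y | reattach g a b c x y) w y + \sum_(y | same_pair x y a b) w y =
   \sum_(y | g x y) w y + \sum_(y | same_pair x y c b) w y)%R.
Proof.
rewrite [in LHS]big_mkcond [X in (_ + X)%R = _]big_mkcond.
rewrite [in RHS]big_mkcond [X in _ = (_ + X)%R]big_mkcond -!big_split.
apply: eq_bigr => y _.
by rewrite /= -!mulrb -!mulrnDr reattach_count.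
Qed.

Lemma deg_reattach x : (deg (reattach g a b c) x + (x == a) = deg g x + (x == c))%N.
Proof.
have := sum_reattach (fun=> 1%N) x.
rewrite !sum_same_pair ?reattach_neq // !natn /deg -!sum1_card => sum_eq.
by apply/eqP; rewrite -(eqn_add2r (x == b)) -!addnA; apply/eqP; exact: sum_eq.
Qed.

Lemma dirichlet_reattach (R : pzRingType) (f : V -> R) :
  (dirichlet (reattach g a b c) f + (f a - f b) ^+ 2 *+ 2 =
   dirichlet g f + (f c - f b) ^+ 2 *+ 2)%R.
Proof.
have sum_pair u v : u != v ->
    (\sum_x \sum_(y | same_pair x y u v) (f x - f y) ^+ 2 = (f u - f v) ^+ 2 *+ 2)%R.
  move=> uv; rewrite (eq_bigr _ (fun x _ => sum_same_pair _ x uv)) big_split /=.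
  by rewrite !sum_mulrn_eq -opprB sqrrN mulr2n.
rewrite /dirichlet -(sum_pair a b neq_ab) -(sum_pair c b reattach_neq) -!big_split.
by apply: eq_bigr => x _; apply: sum_reattach.
Qed.

End Reattach.

Lemma geodesic_prefix g a b c p : geodesic g a b p -> c \in a :: p -> c != b ->
  exists q, [/\ path g a q, last a q = c & {subset a :: q <= [predD1 a :: p & b]}].
Proof.
move=> [gp lp minp] cp cb; set i := index c (a :: p).
have lt_i : i < size p.
  rewrite ltn_neqAle -ltnS index_mem cp andbT; apply: contraNneq cb => i_p.
  by rewrite -(last_take_index cp) -/i i_p take_size lp.
have b_q : b \notin a :: take i p.
  apply/negP => bq; have := minp _ (take_path _ (take_path i gp)) (last_take_index bq).
  by rewrite size_take_min size_takel ?(ltnW lt_i) // leqNgt (leq_ltn_trans (geq_minr _ _) lt_i).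
exists (take i p); split; [exact: take_path | exact: last_take_index |].
move=> z zq; rewrite inE; apply/andP; split; first by apply: contraNneq b_q => <-.
by move: zq; rewrite !inE => /orP[->|/mem_take->]; rewrite ?orbT.
Qed.

End Graphs.

Lemma switch_reattach (V : finType) (e : rel V) v1 u1 v2 u2 : u1 != v2 ->
  switch e v1 u1 v2 u2 = reattach (reattach e v1 u1 u2) u2 v2 v1.
Proof.
move=> u1v2; apply: functional_extensionality => x; apply: functional_extensionality => y.
have : same_pair x y u1 u2 ==> ~~ same_pair x y v2 u2.
  apply/implyP => /orP[]/andP[/eqP-> /eqP->]; apply/negP => /orP[]/andP[/eqP ? /eqP ?];
  by subst; rewrite eqxx in u1v2.
rewrite /switch /reattach /del_edge !(same_pairCr x y u2).
by move: (e x y) (same_pair x y v1 u1) (same_pair x y u2 u1) (same_pair x y u2 v2)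
  (same_pair x y v1 v2) => [] [] [] [] [].
Qed.

Section Switch.
Variables (V : finType) (e : rel V) (v1 u1 v2 u2 : V).
Hypotheses (tree_e : is_tree e) (e11 : e v1 u1) (e22 : e v2 u2).
Hypotheses (u2_on : on_geodesic e v1 v2 u2) (u1_off : ~ on_geodesic e v1 v2 u1).

Local Notation g1 := (reattach e v1 u1 u2).

Let u1_neq_v2 : u1 != v2.
Proof.
have [p [geo _]] := u2_on; apply/eqP => u1v2; apply: u1_off; rewrite u1v2.
by exists p; split; last by case: geo => _ <- _; apply: mem_last.
Qed.

Let avoiding_path :
  exists q, [/\ path e v1 q, last v1 q = u2, u1 \notin v1 :: q & v2 \notin v1 :: q].
Proof.
have [p [geo u2p]] := u2_on.
have u2v2 : u2 != v2 by apply: contraTneq e22 => ->; case: tree_e => -[_ ->].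
have [q [pq lq q_off]] := geodesic_prefix geo u2p u2v2.
exists q; split=> //; last by apply/negP => /q_off; rewrite inE eqxx.
by apply/negP => /q_off /andP[_ u1p]; apply: u1_off; exists p.
Qed.

Let side1 : connect (del_edge e v1 u1) v1 u2.
Proof.
by have [q [pq lq u1q _]] := avoiding_path; apply/connectP; exists q; first exact: path_del_edge.
Qed.

Let tree1 : is_tree g1 := is_tree_reattach tree_e e11 side1.

Let g1_u2v2 : g1 u2 v2.
Proof.
have [q [_ lq u1q _]] := avoiding_path; have [[sym_e _] _ _] := tree_e.
have u1u2 : u1 != u2 by apply: contraNneq u1q => ->; rewrite -lq mem_last.
by rewrite /reattach /del_edge sym_e e22 same_pair_notr; rewrite ?(eq_sym _ u1).
Qed.

Let side2 : connect (del_edge g1 u2 v2) u2 v1.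
Proof.
have [q [pq lq u1q v2q]] := avoiding_path; have [[sym1 _] _ _] := tree1.
rewrite (sym_connect_sym (del_edge_sym _ _ sym1)); apply/connectP; exists q => //.
apply: path_del_edge v2q (sub_path _ (path_del_edge v1 u1q pq)) => x y dxy.
by rewrite /reattach dxy.
Qed.

Let switchE : switch e v1 u1 v2 u2 = reattach g1 u2 v2 v1.
Proof. exact: switch_reattach. Qed.

Lemma is_tree_switch : is_tree (switch e v1 u1 v2 u2).
Proof. by rewrite switchE; apply: is_tree_reattach. Qed.

Lemma deg_switch : deg (switch e v1 u1 v2 u2) =1 deg e.
Proof.
move=> x; apply: (@addIn (x == u2)).
by rewrite switchE deg_reattach //; apply: deg_reattach.
Qed.

Lemma dirichlet_switch (R : comPzRingType) (f : V -> R) :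
  (dirichlet e f = dirichlet (switch e v1 u1 v2 u2) f + 4 * ((f v1 - f u2) * (f v2 - f u1)))%R.
Proof.
rewrite -[dirichlet e f](addrK ((f u2 - f u1) ^+ 2 *+ 2)%R) -(dirichlet_reattach tree_e e11 side1).
rewrite -(addrK ((f v1 - f v2) ^+ 2 *+ 2)%R (dirichlet g1 f)).
by rewrite -(dirichlet_reattach tree1 g1_u2v2 side2) -switchE; ring.
Qed.

End Switch.

Section Rayleigh.
Variables (R : realFieldType) (V : finType) (f : V -> R).
Local Open Scope ring_scope.

Lemma sum_sqr_gt0 : (exists x, f x != 0) -> 0 < \sum_x f x ^+ 2.
Proof.
move=> [x fx]; rewrite (bigD1 x) //= ltr_wpDr ?sumr_ge0 // => [y _|].
  exact: sqr_ge0.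
by rewrite lt_def sqrf_eq0 fx sqr_ge0.
Qed.

Hypothesis norm_gt0 : 0 < \sum_x f x ^+ 2.

Lemma ler_rayleigh (g g' : rel V) :
  (rayleigh g' f <= rayleigh g f) = (dirichlet g' f <= dirichlet g f).
Proof. by rewrite /rayleigh !ler_pM2r ?invr_gt0. Qed.

Lemma ltr_rayleigh (g g' : rel V) :
  (rayleigh g' f < rayleigh g f) = (dirichlet g' f < dirichlet g f).
Proof. by rewrite /rayleigh !ltr_pM2r ?invr_gt0. Qed.

End Rayleigh.

Local Open Scope ring_scope.

Theorem lemma3 (V : finType) (e : rel V) (v1 u1 v2 u2 : V) :
  tree_with_boundary e ->
  e v1 u1 -> e v2 u2 ->
  on_geodesic e v1 v2 u2 -> ~ on_geodesic e v1 v2 u1 ->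
  let e' := switch e v1 u1 v2 u2 in
  [/\ tree_with_boundary e',
      perm_eq (degree_seq e') (degree_seq e),
      boundary e' = boundary e &
      forall (R : realFieldType) (f : V -> R),
        (forall x, x \in boundary e -> f x = 0) ->
        (exists x, f x != 0) ->
        f u2 <= f v1 -> f u1 <= f v2 ->
        rayleigh e' f <= rayleigh e f /\
        (f u2 < f v1 -> f u1 < f v2 -> rayleigh e' f < rayleigh e f)].
Proof.
move=> [tree_e deg_gt0 has_leaf has_inner] e11 e22 u2_on u1_off e'.
have deg_e' : deg e' =1 deg e := deg_switch tree_e e11 e22 u2_on u1_off.
split.
- split=> [|x||]; rewrite ?deg_e' //; first exact: is_tree_switch.
    by case: has_leaf => x; exists x; rewrite deg_e'.
  by case: has_inner => x; exists x; rewrite deg_e'.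
- by rewrite /degree_seq (eq_map deg_e').
- by apply/setP => x; rewrite !inE deg_e'.
move=> R f _ /sum_sqr_gt0 norm_gt0 le_u2v1 le_u1v2.
rewrite ler_rayleigh // ltr_rayleigh // (dirichlet_switch tree_e e11 e22 u2_on u1_off).
rewrite lerDl ltrDl; split=> [|lt_u2v1 lt_u1v2].
  by rewrite mulr_ge0 ?mulr_ge0 // subr_ge0.
by rewrite mulr_gt0 ?mulr_gt0 // subr_gt0.
Qed.
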